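(* Consider the robust matrix completion iteration described in the context (instantiated with $l_{g,c}$ being any of the HOW, HOC or HOP functions). Then the real sequence $\big\{\mathcal{L}_{g,c^k}(\mathbf U^k,\mathbf V^k,\mathbf S^k)\big\}_{k\ge1}$ converges.
   Context: Data: a matrix $\mathbf X\in\mathbb{R}^{m\times n}$, an index set $\Omega\subset\{1,\dots,m\}\times\{1,\dots,n\}$ of observed entries, a target rank $r\ll\min(m,n)$. For a matrix $\mathbf A$, $\mathbf A_\Omega$ keeps the entries with indices in $\Omega$ and sets the others to $0$. Loss functions: for $c>0$ and a continuous, nondecreasing, differentiable function $g$ on $(0,\infty)$ with $g'(c)>0$, set $a=c/g'(c)$, $b=c^2/2-a\,g(c)$ and $l_{g,c}(x)=x^2/2$ if $|x|\le c$, $l_{g,c}(x)=a\,g(|x|)+b$ if $|x|>c$. The three instances are: HOW ($g(x)=\frac{\sigma^2}{2}(1-e^{-x^2/\sigma^2})$, $\sigma>0$), HOC ($g(x)=\frac{\gamma^2}{2}\ln(1+x^2/\gamma^2)$, $\gamma>0$), HOP ($g(x)=|x|^p$, $0<p\le1$). In each case $x\mapsto x^2/2-l_{g,c}(x)$ is convex and differentiable. Define $\varphi_{g,c}(y)=\sup_{t}[l_{g,c}(t)-(t-y)^2/2]$ and $P_{\varphi_{g,c}}(x)=\max\{0,|x|-a\,g'(|x|)\}\operatorname{sign}(x)$ (value $0$ at $x=0$), the minimizer of $y\mapsto (x-y)^2/2+\varphi_{g,c}(y)$. For matrices, $l_{g,c}$, $\varphi_{g,c}$ are summed entrywise and $P_{\varphi_{g,c}}$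 acts entrywise. Objective: $\mathcal{L}_{g,c}(\mathbf U,\mathbf V,\mathbf S)=\tfrac12\|\mathbf X_\Omega-(\mathbf U\mathbf V)_\Omega-\mathbf S_\Omega\|_F^2+\sum_{(i,j)\in\Omega}\varphi_{g,c}(S_{ij})$ for $\mathbf U\in\mathbb{R}^{m\times r}$, $\mathbf V\in\mathbb{R}^{r\times n}$, $\mathbf S\in\mathbb{R}^{m\times n}$ with $\mathbf S_{\Omega^c}=\mathbf 0$. Iteration (given initial $\mathbf U^0,\mathbf V^0$, a constant $\xi>0$, and $c^{-1}=+\infty$): for $k=0,1,2,\dots$: (i) $\mathbf D^k=\mathbf X-\mathbf U^k\mathbf V^k$; $d^k=\mathrm{IQR}(\mathrm{vec}(\mathbf D^k_\Omega))/1.349$ where IQR is the sample interquartile range of the entries indexed by $\Omega$; $c^k=\min\{\xi d^k,c^{k-1}\}$. (ii) $\mathbf S^{k+1}_\Omega=P_{\varphi_{g,c^k}}(\mathbf D^k_\Omega)$, $\mathbf S^{k+1}_{\Omega^c}=\mathbf 0$; $\mathbf H=\mathbf X_\Omega-\mathbf S^{k+1}_\Omega$. (iii) With $h(\mathbf U,\mathbf V)=\tfrac12\|\mathbf H_\Omega-(\mathbf U\mathbf V)_\Omega\|_F^2$, $\nabla_{\mathbf U}h=-(\mathbf H_\Omega-(\mathbf U\mathbf V)_\Omega)\mathbf V^T$, $\nabla_{\mathbf V}h=-\mathbf U^T(\mathbf H_\Omega-(\mathbf U\mathbf V)_\Omega)$: set $\widetilde\nabla_{\mathbf U}=\nabla_{\mathbf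 U}h(\mathbf U^k,\mathbf V^k)(\mathbf V^k\mathbf V^{kT})^{-1}$, $\mu_{\mathbf U}=\langle\nabla_{\mathbf U}h,\widetilde\nabla_{\mathbf U}\rangle/\|(\widetilde\nabla_{\mathbf U}\mathbf V^k)_\Omega\|_F^2$, $\mathbf U^{k+1}=\mathbf U^k-\mu_{\mathbf U}\widetilde\nabla_{\mathbf U}$; then $\widetilde\nabla_{\mathbf V}=(\mathbf U^{k+1T}\mathbf U^{k+1})^{-1}\nabla_{\mathbf V}h(\mathbf U^{k+1},\mathbf V^k)$, $\mu_{\mathbf V}=\langle\nabla_{\mathbf V}h,\widetilde\nabla_{\mathbf V}\rangle/\|(\mathbf U^{k+1}\widetilde\nabla_{\mathbf V})_\Omega\|_F^2$, $\mathbf V^{k+1}=\mathbf V^k-\mu_{\mathbf V}\widetilde\nabla_{\mathbf V}$ (scaled alternating steepest descent). *)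

From HB Require Import structures.
From mathcomp Require Import all_boot all_order all_algebra.
From mathcomp Require Import all_classical all_reals all_analysis.

Set Implicit Arguments.
Unset Strict Implicit.
Unset Printing Implicit Defensive.

Import Order.TTheory GRing.Theory Num.Theory.
Import numFieldNormedType.Exports.
Local Open Scope ring_scope.
Local Open Scope classical_set_scope.

Section RMC.
Variable R : realType.

Inductive rmc_gkind := HOW of R | HOC of R | HOP of R.

Definition rmc_gkind_ok (K : rmc_gkind) : Prop :=
  match K with
  | HOW s => 0 < s
  | HOC t => 0 < t
  | HOP p => 0 < p /\ p <= 1
  end.

Definition rmc_gfun (K : rmc_gkind) (x : R) : R :=
  match K with
  | HOW s => s ^+ 2 / 2 * (1 - expR (- (x ^+ 2 / s ^+ 2)))
  | HOC t => t ^+ 2 / 2 * ln (1 + x ^+ 2 / t ^+ 2)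
  | HOP p => `|x| `^ p
  end.

Definition rmc_dgfun (K : rmc_gkind) (x : R) : R :=
  match K with
  | HOW s => x * expR (- (x ^+ 2 / s ^+ 2))
  | HOC t => x / (1 + x ^+ 2 / t ^+ 2)
  | HOP p => p * x `^ (p - 1)
  end.

Definition rmc_acoef (K : rmc_gkind) (c : R) : R := c / rmc_dgfun K c.
Definition rmc_bcoef (K : rmc_gkind) (c : R) : R := c ^+ 2 / 2 - rmc_acoef K c * rmc_gfun K c.

Definition rmc_lgc (K : rmc_gkind) (c x : R) : R :=
  if `|x| <= c then x ^+ 2 / 2 else rmc_acoef K c * rmc_gfun K `|x| + rmc_bcoef K c.

Definition rmc_phigc (K : rmc_gkind) (c y : R) : R :=
  sup [set rmc_lgc K c t - (t - y) ^+ 2 / 2 | t in [set: R]].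

Definition rmc_proxgc (K : rmc_gkind) (c x : R) : R :=
  if x == 0 then 0
  else Num.max 0 (`|x| - rmc_acoef K c * rmc_dgfun K `|x|) * Num.sg x.

Definition rmc_maskO m n (Om : {set 'I_m * 'I_n}) (A : 'M[R]_(m, n)) : 'M[R]_(m, n) :=
  \matrix_(i, j) (if (i, j) \in Om then A i j else 0).

Definition rmc_frob2 m n (A : 'M[R]_(m, n)) : R := \sum_i \sum_j A i j ^+ 2.

Definition rmc_minner m n (A B : 'M[R]_(m, n)) : R := \sum_i \sum_j A i j * B i j.

Definition rmc_Lobj (K : rmc_gkind) (c : R) m n r (X : 'M[R]_(m, n))
  (Om : {set 'I_m * 'I_n}) (U : 'M[R]_(m, r)) (V : 'M[R]_(r, n))
  (S : 'M[R]_(m, n)) : R :=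
  2^-1 * rmc_frob2 (rmc_maskO Om X - rmc_maskO Om (U *m V) - rmc_maskO Om S)
  + \sum_(p in Om) rmc_phigc K c (S p.1 p.2).

(* Sample quantile (linear interpolation between order statistics, i.e. the
   "type 7" convention): for sorted x_0 <= ... <= x_{N-1} and q = k/4,
   h = (N-1) k / 4, Q = x_{floor h} + (h - floor h)(x_{floor h + 1} - x_{floor h}). *)
Definition rmc_quartile (s : seq R) (k : nat) : R :=
  let t := sort <=%R s in
  let h := ((size t).-1 * k)%N in
  let i := (h %/ 4)%N in
  let fr := ((h %% 4)%:R / 4 : R) in
  t`_i + fr * (t`_i.+1 - t`_i).

Definition rmc_iqr (s : seq R) : R := rmc_quartile s 3 - rmc_quartile s 1.

Definition rmc_entriesO m n (Om : {set 'I_m * 'I_n}) (A : 'M[R]_(m, n)) : seq R :=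
  [seq A p.1 p.2 | p <- enum Om].

Definition rmc_dscale m n (Om : {set 'I_m * 'I_n}) (D : 'M[R]_(m, n)) : R :=
  rmc_iqr (rmc_entriesO Om D) / (1349%:R / 1000%:R).

Definition rmc_gradU m n r (Om : {set 'I_m * 'I_n}) (H : 'M[R]_(m, n))
  (U : 'M[R]_(m, r)) (V : 'M[R]_(r, n)) : 'M[R]_(m, r) :=
  - ((rmc_maskO Om H - rmc_maskO Om (U *m V)) *m V^T).

Definition rmc_gradV m n r (Om : {set 'I_m * 'I_n}) (H : 'M[R]_(m, n))
  (U : 'M[R]_(m, r)) (V : 'M[R]_(r, n)) : 'M[R]_(r, n) :=
  - (U^T *m (rmc_maskO Om H - rmc_maskO Om (U *m V))).

End RMC.

From HB Require Import structures.
From mathcomp Require Import all_boot all_order all_algebra.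
From mathcomp Require Import all_classical all_reals all_analysis.
From mathcomp Require Import ring lra.

Set Implicit Arguments.
Unset Strict Implicit.
Unset Printing Implicit Defensive.

Import Order.TTheory GRing.Theory Num.Theory.
Import numFieldNormedType.Exports.
Local Open Scope classical_set_scope.
Local Open Scope ring_scope.

(* The objective does not increase along the iteration, and it is bounded
   below by 0 (phi_{g,c}(s) >= l_{g,c}(s) >= 0), so it converges.
   For fixed c the S-update minimises the objective exactly: since g'(x)/x is
   nonincreasing for the three choices of g, x^2/2 - l_{g,c}(x) is a convex
   function of |x| with subgradient max(0, |x| - a g'(|x|)), and this makes
   P_phi(d) attain the supremum defining phi_{g,c} at t = d.  The U- and
   V-updates are exact line searches for the quadratic data term.  Finally
   l_{g,c} is pointwise nondecreasing in c, hence so is phi_{g,c}, and the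
   scale c^k only decreases. *)

Section RealDerivative.
Variable R : realType.

Lemma ler_is_derive_ge0 (f df : R -> R) (u x : R) : u <= x ->
  (forall t, u <= t <= x -> is_derive t 1 f (df t)) ->
  (forall t, u <= t <= x -> 0 <= df t) -> f u <= f x.
Proof.
move=> ux fd df_ge0.
have fcont : {within `[u, x], continuous f}.
  apply: derivable_within_continuous => t; rewrite in_itv /= => utx.
  by have [] := fd t utx.
have fd' t : t \in `]u, x[ -> is_derive t 1 f (df t).
  by rewrite in_itv /= => /andP[ut tx]; apply: fd; rewrite !ltW.
have [t] := MVT_segment ux fd' fcont.
rewrite in_itv /= => utx e.
by rewrite -subr_ge0 e mulr_ge0 ?df_ge0 // subr_ge0.
Qed.

Lemma tangent_le_nondecr_derive (f df : R -> R) (lo u x : R) :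
  (forall t, lo <= t -> is_derive t 1 f (df t)) ->
  {in [pred t | lo <= t] &, {homo df : s t / s <= t}} ->
  lo <= u -> lo <= x -> f u + df u * (x - u) <= f x.
Proof.
move=> fd df_homo lou lox.
pose h t := f t - df u * t.
have hd t : lo <= t -> is_derive t 1 h (df t - df u).
  move=> lot; have := is_deriveB (fd t lot) (is_deriveZ (df u) (@is_derive_id _ R t 1)).
  by rewrite [_ *: 1]mulr1.
suff : f u - df u * u <= f x - df u * x by rewrite mulrBr; lra.
have [ux|xu] := leP u x.
  apply: (ler_is_derive_ge0 (f := h) (df := fun t => df t - df u)) ux _ _ => t /andP[ut _].
    exact/hd/(le_trans lou ut).
  by rewrite subr_ge0 df_homo // inE (le_trans lou ut).
rewrite -lerN2.
apply: (ler_is_derive_ge0 (f := fun t => - h t) (df := fun t => - (df t - df u)))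
  (ltW xu) _ _ => t /andP[xt tu].
  exact/is_deriveN/hd/(le_trans lox xt).
by rewrite oppr_ge0 subr_le0 df_homo // inE (le_trans lox xt).
Qed.

End RealDerivative.

Section LossShape.
Variable R : realType.

Lemma is_derive_sqr_div (s x : R) :
  is_derive x 1 (fun y : R => y ^+ 2 / s ^+ 2) (2 * x / s ^+ 2).
Proof.
have -> : (fun y : R => y ^+ 2 / s ^+ 2) = (fun y => (s ^+ 2)^-1 *: (id y ^+ 2)).
  by apply/funext => y; rewrite /= mulrC.
apply: is_derive_eq.
by rewrite -[x%:A]/(x * 1) -[_ *: _]/(_ * _); ring.
Qed.

Lemma is_derive_gfun_HOW (s x : R) : s != 0 ->
  is_derive x 1 (rmc_gfun (HOW s)) (rmc_dgfun (HOW s) x).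
Proof.
move=> s0; set h := fun y : R => - (y ^+ 2 / s ^+ 2).
have hd : is_derive x 1 h (- (2 * x / s ^+ 2)) by exact/is_deriveN/is_derive_sqr_div.
have ed : is_derive x 1 (expR \o h) (expR (h x) * - (2 * x / s ^+ 2)).
  exact: is_derive1_comp.
have -> : rmc_gfun (HOW s) = (fun y => (s ^+ 2 / 2) *: (cst 1 - (expR \o h)) y).
  by apply/funext.
apply: is_derive_eq.
by rewrite /= /h -[_ *: _]/(_ * _); field.
Qed.

Lemma is_derive_gfun_HOC (s x : R) : s != 0 ->
  is_derive x 1 (rmc_gfun (HOC s)) (rmc_dgfun (HOC s) x).
Proof.
move=> s0; set h := fun y : R => 1 + y ^+ 2 / s ^+ 2.
have h_gt0 : 0 < h x by rewrite /h ltr_pwDl // divr_ge0 // sqr_ge0.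
have hd : is_derive x 1 h (2 * x / s ^+ 2).
  have -> : h = cst 1 + (fun y : R => y ^+ 2 / s ^+ 2) by apply/funext.
  by have := is_deriveD (is_derive_cst (1 : R) x 1) (is_derive_sqr_div s x); rewrite add0r.
have ld : is_derive x 1 (@ln R \o h) ((h x)^-1 * (2 * x / s ^+ 2)).
  exact: is_derive1_comp (is_derive1_ln h_gt0) hd.
have -> : rmc_gfun (HOC s) = (fun y => (s ^+ 2 / 2) *: (@ln R \o h) y) by apply/funext.
apply: is_derive_eq.
rewrite /= /h -[_ *: _]/(_ * _); field.
by rewrite s0 /= paddr_eq0 ?sqr_ge0 // negb_and sqrf_eq0 s0.
Qed.

Lemma is_derive_gfun_HOP (p x : R) : 0 < x ->
  is_derive x 1 (rmc_gfun (HOP p)) (rmc_dgfun (HOP p) x).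
Proof.
move=> x0; apply: near_eq_is_derive (is_derive1_powR p x0).
near=> y; rewrite /= gtr0_norm //; near: y; exact: lt_nbhsr.
Unshelve. all: end_near. Qed.

Variable K : rmc_gkind R.
Hypothesis K_ok : rmc_gkind_ok K.

Lemma is_derive_gfun (x : R) : 0 < x -> is_derive x 1 (rmc_gfun K) (rmc_dgfun K x).
Proof.
move=> x0; case: K K_ok => [s|s|p] /= s0.
- by apply: is_derive_gfun_HOW; rewrite gt_eqF.
- by apply: is_derive_gfun_HOC; rewrite gt_eqF.
- exact: is_derive_gfun_HOP.
Qed.

Lemma dgfun_gt0 (x : R) : 0 < x -> 0 < rmc_dgfun K x.
Proof.
move=> x0; case: K K_ok => [s|s|p] /= s0.
- by rewrite mulr_gt0 // expR_gt0.
- by rewrite divr_gt0 // ltr_pwDl // divr_ge0 // sqr_ge0.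
- by case: s0 => p0 _; rewrite mulr_gt0 // powR_gt0.
Qed.

Lemma dgfun_div_nonincr (x y : R) : 0 < x -> x <= y ->
  rmc_dgfun K y / y <= rmc_dgfun K x / x.
Proof.
move=> x0 xy; have y0 : 0 < y := lt_le_trans x0 xy.
case: K K_ok => [s|s|p] /= s0.
- rewrite mulrAC [x * _ / x]mulrAC !divff ?gt_eqF // !mul1r ler_expR lerN2.
  by apply: ler_wpM2r; [rewrite invr_ge0 sqr_ge0 | nra].
- rewrite ![_ / (1 + _) / _]mulrAC !divff ?gt_eqF // !mul1r.
  rewrite lef_pV2 ?posrE ?ltr_pwDl ?divr_ge0 ?sqr_ge0 // lerD2l.
  by apply: ler_wpM2r; [rewrite invr_ge0 sqr_ge0 | nra].
- case: s0 => p0 p1; rewrite -!mulrA; apply: ler_wpM2l; first exact: ltW.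
  apply: ler_pM; rewrite ?powR_ge0 ?invr_ge0 ?(ltW y0) //; last by rewrite lef_pV2.
  rewrite -[p - 1]opprB !powRN lef_pV2 ?posrE ?powR_gt0 //.
  by apply: (ge0_ler_powR _ _ _ xy); rewrite ?nnegrE ?subr_ge0 // ltW.
Qed.

End LossShape.

Section HuberType.
Variable R : realType.
Variable K : rmc_gkind R.
Hypothesis K_ok : rmc_gkind_ok K.
Local Notation g := (rmc_gfun K).
Local Notation dg := (rmc_dgfun K).
Local Notation a := (rmc_acoef K).
Local Notation b := (rmc_bcoef K).
Local Notation l := (rmc_lgc K).
Local Notation prox := (rmc_proxgc K).

Lemma acoef_gt0 (c : R) : 0 < c -> 0 < a c.
Proof. by move=> c0; rewrite /rmc_acoef divr_gt0 ?dgfun_gt0. Qed.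

Lemma acoef_dgfun_ratio (c : R) : 0 < c -> a c * (dg c / c) = 1.
Proof.
move=> c0; rewrite /rmc_acoef mulrA divfK ?divff ?gt_eqF ?dgfun_gt0 //.
Qed.

Lemma acoef_nondecr (c' c : R) : 0 < c' -> c' <= c -> a c' <= a c.
Proof.
move=> c'0 c'c; have c0 := lt_le_trans c'0 c'c.
rewrite /rmc_acoef -(invf_div (dg c')) -(invf_div (dg c)).
by rewrite lef_pV2 ?posrE ?divr_gt0 ?dgfun_gt0 ?dgfun_div_nonincr.
Qed.

Definition tail_gap (c x : R) := x ^+ 2 / 2 - a c * g x - b c.
Definition tail_slope (c x : R) := x - a c * dg x.

Lemma tail_gap_id (c : R) : tail_gap c c = 0.
Proof. by rewrite /tail_gap /rmc_bcoef; ring. Qed.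

Lemma tail_slopeE (c s : R) : 0 < s -> tail_slope c s = s * (1 - a c * (dg s / s)).
Proof. by move=> s0; rewrite /tail_slope; field; rewrite gt_eqF. Qed.

Lemma tail_slope_id (c : R) : 0 < c -> tail_slope c c = 0.
Proof. by move=> c0; rewrite tail_slopeE // acoef_dgfun_ratio // subrr mulr0. Qed.

Lemma tail_slope_ge0 (c s : R) : 0 < c -> c <= s -> 0 <= tail_slope c s.
Proof.
move=> c0 cs; have s0 := lt_le_trans c0 cs.
rewrite tail_slopeE //; apply: mulr_ge0; first exact: ltW.
rewrite subr_ge0 -(acoef_dgfun_ratio c0).
by rewrite ler_pM2l ?acoef_gt0 ?dgfun_div_nonincr.
Qed.

Lemma tail_slope_le0 (c s : R) : 0 < c -> 0 < s -> s <= c -> tail_slope c s <= 0.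
Proof.
move=> c0 s0 sc; rewrite tail_slopeE // pmulr_rle0 // subr_le0.
by rewrite -{1}(acoef_dgfun_ratio c0) ler_pM2l ?acoef_gt0 ?dgfun_div_nonincr.
Qed.

Lemma tail_slope_nondecr (c s t : R) : 0 < c -> c <= s -> s <= t ->
  tail_slope c s <= tail_slope c t.
Proof.
move=> c0 cs st; have s0 := lt_le_trans c0 cs; have t0 := lt_le_trans s0 st.
have := tail_slope_ge0 c0 cs; rewrite !tail_slopeE // pmulr_rge0 // => q_ge0.
apply: le_trans (ler_wpM2r q_ge0 st) (ler_wpM2l (ltW t0) _).
by rewrite lerD2l lerN2 ler_pM2l ?acoef_gt0 ?dgfun_div_nonincr.
Qed.

Lemma is_derive_tail_gap (c t : R) : 0 < t -> is_derive t 1 (tail_gap c) (tail_slope c t).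
Proof.
move=> t0.
have -> : tail_gap c = (fun x => 2^-1 *: (id x ^+ 2)) - a c *: g - cst (b c).
  by apply/funext => x; rewrite /tail_gap /= mulrC.
have := is_derive_gfun K_ok t0 => gd.
apply: is_derive_eq.
rewrite /tail_slope -[2^-1 *: _]/(2^-1 * _) -[a c *: _]/(a c * _) -[t%:A]/(t * 1).
by field.
Qed.

Lemma tail_gap_tangent (c u x : R) : 0 < c -> c <= u -> c <= x ->
  tail_gap c u + tail_slope c u * (x - u) <= tail_gap c x.
Proof.
move=> c0; apply: tangent_le_nondecr_derive => [t ct|s t].
  exact/is_derive_tail_gap/(lt_le_trans c0 ct).
by rewrite !inE => cs _; exact: tail_slope_nondecr.
Qed.

Lemma tail_gap_ge0 (c x : R) : 0 < c -> c <= x -> 0 <= tail_gap c x.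
Proof.
move=> c0 cx; have := tail_gap_tangent c0 (lexx c) cx.
by rewrite tail_gap_id tail_slope_id // mul0r add0r.
Qed.

Lemma tail_gap_nonincr (c' c x : R) : 0 < c' -> c' <= c -> c <= x ->
  tail_gap c x <= tail_gap c' x.
Proof.
move=> c'0 c'c cx; have c0 := lt_le_trans c'0 c'c.
suff : tail_gap c' c - tail_gap c c <= tail_gap c' x - tail_gap c x.
  by have := tail_gap_ge0 c'0 c'c; rewrite tail_gap_id; lra.
apply: (ler_is_derive_ge0 (f := tail_gap c' - tail_gap c)
  (df := fun t => tail_slope c' t - tail_slope c t)) cx _ _ => t /andP[ct _];
  have t0 := lt_le_trans c0 ct.
  exact: is_deriveB (is_derive_tail_gap c' t0) (is_derive_tail_gap c t0).
have -> : tail_slope c' t - tail_slope c t = (a c - a c') * dg t.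
  by rewrite /tail_slope; ring.
by rewrite mulr_ge0 ?subr_ge0 ?acoef_nondecr // ltW // dgfun_gt0.
Qed.

Definition quad_gap (c u : R) := if u <= c then 0 else tail_gap c u.

Lemma lgcE (c t : R) : l c t = t ^+ 2 / 2 - quad_gap c `|t|.
Proof.
rewrite /rmc_lgc /quad_gap; case: leP => _; first by rewrite subr0.
by rewrite /tail_gap real_normK ?num_real //; ring.
Qed.

Lemma quad_gap_ge0 (c u : R) : 0 < c -> 0 <= quad_gap c u.
Proof. by move=> c0; rewrite /quad_gap; case: (leP u c) => // /ltW; exact: tail_gap_ge0 c0. Qed.

Lemma quad_gap_nonincr (c' c u : R) : 0 < c' -> c' <= c -> quad_gap c u <= quad_gap c' u.
Proof.
move=> c'0 c'c; rewrite /quad_gap; case: (leP u c) => uc.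
  by case: (leP u c') => // /ltW; exact: tail_gap_ge0 c'0.
by rewrite (leNgt u c') (le_lt_trans c'c uc) /=; apply: tail_gap_nonincr; rewrite // ltW.
Qed.

Definition prox_norm (c u : R) := if u == 0 then 0 else Num.max 0 (tail_slope c u).

Lemma proxgcE (c d : R) : prox c d = prox_norm c `|d| * Num.sg d.
Proof. by rewrite /rmc_proxgc /prox_norm normr_eq0; case: eqP => // ->; rewrite mul0r. Qed.

Lemma prox_norm_ge0 (c u : R) : 0 <= prox_norm c u.
Proof. by rewrite /prox_norm; case: eqP => // _; rewrite le_max lexx. Qed.

Lemma quad_gap_subgrad (c u x : R) : 0 < c -> 0 <= u -> 0 <= x ->
  quad_gap c u + prox_norm c u * (x - u) <= quad_gap c x.
Proof.
move=> c0 u0 x0; have [uc|cu] := leP u c.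
  have -> : prox_norm c u = 0.
    rewrite /prox_norm; case: eqP => // /eqP u_neq0; apply/max_idPl.
    by apply: tail_slope_le0; rewrite // lt_def u_neq0 u0.
  by rewrite /quad_gap uc mul0r addr0; exact: quad_gap_ge0.
have -> : prox_norm c u = tail_slope c u.
  by rewrite /prox_norm gt_eqF ?(lt_trans c0 cu) //; apply/max_idPr/tail_slope_ge0/ltW.
rewrite /quad_gap (leNgt u c) cu /=; case: (leP x c) => [xc|/ltW cx].
  have := tail_gap_tangent c0 (ltW cu) (lexx c); rewrite tail_gap_id.
  have : tail_slope c u * (x - u) <= tail_slope c u * (c - u).
    by rewrite ler_wpM2l ?lerD2r // tail_slope_ge0 // ltW.
  lra.
exact: tail_gap_tangent (ltW cu) cx.
Qed.

(* [prox_norm c |d|] is a subgradient of [quad_gap c] at [|d|], so that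
   [t * prox c d - quad_gap c |t|] is largest at [t = d]. *)
Lemma lgc_prox_max (c d t : R) : 0 < c ->
  l c t - (t - prox c d) ^+ 2 / 2 <= l c d - (d - prox c d) ^+ 2 / 2.
Proof.
move=> c0; rewrite proxgcE; set w := prox_norm c `|d|.
have w0 : 0 <= w := prox_norm_ge0 c `|d|.
have subgrad := quad_gap_subgrad c0 (normr_ge0 d) (normr_ge0 t).
have dw : d * (w * Num.sg d) = w * `|d| by rewrite normrEsg; ring.
have tw : t * (w * Num.sg d) <= w * `|t|.
  apply: le_trans (ler_norm _) _.
  rewrite !normrM (ger0_norm w0) normr_sg mulrC -mulrA ler_wpM2l //.
  by case: (d != 0); rewrite /= ?mul1r ?mul0r.
have sqr_shift (y : R) : y ^+ 2 / 2 - quad_gap c `|y| - (y - w * Num.sg d) ^+ 2 / 2 =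
    y * (w * Num.sg d) - (w * Num.sg d) ^+ 2 / 2 - quad_gap c `|y|.
  by field.
rewrite !lgcE !sqr_shift dw; rewrite -/w mulrBr in subgrad; lra.
Qed.

Lemma lgc_nondecr (c' c t : R) : 0 < c' -> c' <= c -> l c' t <= l c t.
Proof. by move=> c'0 c'c; rewrite !lgcE lerD2l lerN2 quad_gap_nonincr. Qed.

Lemma lgc_ge0 (c t : R) : 0 < c -> 0 <= l c t.
Proof.
move=> c0; rewrite /rmc_lgc; case: (leP `|t| c) => tc; first by rewrite divr_ge0 ?sqr_ge0.
have g_nondecr : g c <= g `|t|.
  apply: (ler_is_derive_ge0 (df := dg)) (ltW tc) _ _ => x /andP[cx _];
    have x0 := lt_le_trans c0 cx.
    exact: is_derive_gfun.
  exact/ltW/dgfun_gt0.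
have : a c * g c <= a c * g `|t| by rewrite ler_pM2l ?acoef_gt0.
have : 0 <= c ^+ 2 / 2 by rewrite divr_ge0 ?sqr_ge0.
rewrite /rmc_bcoef; lra.
Qed.

Definition phi_set (c y : R) := [set l c t - (t - y) ^+ 2 / 2 | t in [set: R]].

Lemma phigc_ge (c s t : R) : has_ubound (phi_set c s) ->
  l c t - (t - s) ^+ 2 / 2 <= rmc_phigc K c s.
Proof. by move=> s_ub; apply: ub_le_sup => //; exists t. Qed.

Lemma phi_set_ub_prox (c' c d : R) : 0 < c' -> c' <= c ->
  ubound (phi_set c' (prox c d)) (l c d - (d - prox c d) ^+ 2 / 2).
Proof.
move=> c'0 c'c _ [t _ <-]; apply: le_trans (lgc_prox_max d t (lt_le_trans c'0 c'c)).
by rewrite lerD2r lgc_nondecr.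
Qed.

Lemma phigc_prox (c d : R) : 0 < c ->
  rmc_phigc K c (prox c d) = l c d - (d - prox c d) ^+ 2 / 2.
Proof.
move=> c0; have ub := phi_set_ub_prox (d := d) c0 (lexx c).
apply/le_anti/andP; split; last by apply: phigc_ge; exists (l c d - (d - prox c d) ^+ 2 / 2).
by apply: ge_sup ub; exists (l c d - (d - prox c d) ^+ 2 / 2); exists d.
Qed.

Lemma phigc_nondecr (c' c s : R) : 0 < c' -> c' <= c -> has_ubound (phi_set c s) ->
  rmc_phigc K c' s <= rmc_phigc K c s.
Proof.
move=> c'0 c'c s_ub; apply: ge_sup; first by exists (l c' 0 - (0 - s) ^+ 2 / 2); exists 0.
by move=> _ [t _ <-]; apply: le_trans (phigc_ge t s_ub); rewrite lerD2r lgc_nondecr.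
Qed.
End HuberType.

Section Frobenius.
Variable R : realType.

Lemma frob2_ge0 p q (A : 'M[R]_(p, q)) : 0 <= rmc_frob2 A.
Proof. by apply: sumr_ge0 => i _; apply: sumr_ge0 => j _; exact: sqr_ge0. Qed.

Lemma minner_trmx p q (A B : 'M[R]_(p, q)) : rmc_minner A B = \tr (A *m B^T).
Proof.
by apply: eq_bigr => i _; rewrite !mxE; apply: eq_bigr => j _; rewrite !mxE.
Qed.

Lemma frob2_addZ p q (E M : 'M[R]_(p, q)) (k : R) :
  rmc_frob2 (E + k *: M) = rmc_frob2 E + 2 * k * rmc_minner E M + k ^+ 2 * rmc_frob2 M.
Proof.
rewrite /rmc_frob2 /rmc_minner !mulr_sumr -!big_split /=; apply: eq_bigr => i _.
by rewrite !mulr_sumr -!big_split /=; apply: eq_bigr => j _; rewrite !mxE; ring.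
Qed.

(* Exact line search: the step minimises the quadratic [k |-> |E - k M|^2]
   (and is [0] when [M = 0], since [x / 0 = 0]). *)
Lemma frob2_line_search p q (E M : 'M[R]_(p, q)) :
  rmc_frob2 (E - (rmc_minner E M / rmc_frob2 M) *: M) <= rmc_frob2 E.
Proof.
rewrite -scaleNr frob2_addZ; set e := rmc_minner E M; set f := rmc_frob2 M.
have [->|f_neq0] := eqVneq f 0; first by rewrite invr0 mulr0 oppr0 !(mulr0, mul0r) !addr0.
rewrite -addrA.
have -> : 2 * - (e / f) * e + (- (e / f)) ^+ 2 * f = - (e ^+ 2 / f) by field.
by rewrite gerDl oppr_le0 divr_ge0 ?sqr_ge0 ?frob2_ge0.
Qed.

Variables (m n : nat) (Om : {set 'I_m * 'I_n}).
Local Notation mask := (rmc_maskO Om).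

Lemma maskD (A B : 'M[R]_(m, n)) : mask (A + B) = mask A + mask B.
Proof. by apply/matrixP => i j; rewrite !mxE; case: ifP; rewrite ?addr0. Qed.

Lemma maskB (A B : 'M[R]_(m, n)) : mask (A - B) = mask A - mask B.
Proof. by apply/matrixP => i j; rewrite !mxE; case: ifP; rewrite ?subr0. Qed.

Lemma maskZ (k : R) (A : 'M[R]_(m, n)) : mask (k *: A) = k *: mask A.
Proof. by apply/matrixP => i j; rewrite !mxE; case: ifP; rewrite ?mulr0. Qed.

Lemma maskK (A : 'M[R]_(m, n)) : mask (mask A) = mask A.
Proof. by apply/matrixP => i j; rewrite !mxE; case: ((i, j) \in Om). Qed.

Lemma minner_maskl (A B : 'M[R]_(m, n)) : rmc_minner (mask A) B = rmc_minner (mask A) (mask B).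
Proof.
apply: eq_bigr => i _; apply: eq_bigr => j _.
by rewrite !mxE; case: ifP; rewrite ?mul0r.
Qed.

Lemma frob2_mask (A : 'M[R]_(m, n)) : rmc_frob2 (mask A) = \sum_(p in Om) A p.1 p.2 ^+ 2.
Proof.
rewrite /rmc_frob2 pair_bigA [RHS]big_mkcond; apply: eq_bigr => -[i j] _.
by rewrite !mxE /=; case: ifP; rewrite ?expr0n.
Qed.

Lemma minner_gradU r (H : 'M[R]_(m, n)) (U T : 'M[R]_(m, r)) (V : 'M[R]_(r, n)) :
  rmc_minner (rmc_gradU Om H U V) T =
  - rmc_minner (mask H - mask (U *m V)) (mask (T *m V)).
Proof.
rewrite /rmc_gradU -maskB -minner_maskl !minner_trmx.
by rewrite mulNmx linearN trmx_mul mulmxA.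
Qed.

Lemma minner_gradV r (H : 'M[R]_(m, n)) (U : 'M[R]_(m, r)) (V T : 'M[R]_(r, n)) :
  rmc_minner (rmc_gradV Om H U V) T =
  - rmc_minner (mask H - mask (U *m V)) (mask (U *m T)).
Proof.
rewrite /rmc_gradV -maskB -minner_maskl !minner_trmx.
by rewrite mulNmx linearN trmx_mul mulmxA mxtrace_mulC mulmxA.
Qed.

Lemma frob2_descent_U r (H : 'M[R]_(m, n)) (U U' T : 'M[R]_(m, r)) (V : 'M[R]_(r, n)) :
  U' = U - (rmc_minner (rmc_gradU Om H U V) T / rmc_frob2 (mask (T *m V))) *: T ->
  rmc_frob2 (mask H - mask (U' *m V)) <= rmc_frob2 (mask H - mask (U *m V)).
Proof.
move=> ->; rewrite minner_gradU mulNr scaleNr opprK mulmxDl -scalemxAl maskD maskZ.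
by rewrite opprD addrA frob2_line_search.
Qed.

Lemma frob2_descent_V r (H : 'M[R]_(m, n)) (U : 'M[R]_(m, r)) (V V' T : 'M[R]_(r, n)) :
  V' = V - (rmc_minner (rmc_gradV Om H U V) T / rmc_frob2 (mask (U *m T))) *: T ->
  rmc_frob2 (mask H - mask (U *m V')) <= rmc_frob2 (mask H - mask (U *m V)).
Proof.
move=> ->; rewrite minner_gradV mulNr scaleNr opprK mulmxDr -scalemxAr maskD maskZ.
by rewrite opprD addrA frob2_line_search.
Qed.

End Frobenius.

Section Objective.
Variable R : realType.
Variable K : rmc_gkind R.
Hypothesis K_ok : rmc_gkind_ok K.
Variables (m n : nat) (Om : {set 'I_m * 'I_n}) (X : 'M[R]_(m, n)).
Local Notation mask := (rmc_maskO Om).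
Local Notation L c := (rmc_Lobj K c X Om).

Definition phi_bounded (c : R) (S : 'M[R]_(m, n)) :=
  forall p, p \in Om -> has_ubound (phi_set K c (S p.1 p.2)).

Lemma phi_bounded_prox (c' c : R) (D : 'M[R]_(m, n)) : 0 < c' -> c' <= c ->
  phi_bounded c' (mask (map_mx (rmc_proxgc K c) D)).
Proof.
move=> c'0 c'c p pO; rewrite !mxE -surjective_pairing pO.
by eexists; exact: phi_set_ub_prox.
Qed.

Lemma LobjE (c : R) r (U : 'M[R]_(m, r)) (V : 'M[R]_(r, n)) (S : 'M[R]_(m, n)) :
  L c U V S = \sum_(p in Om)
    (2^-1 * (X - U *m V - S) p.1 p.2 ^+ 2 + rmc_phigc K c (S p.1 p.2)).
Proof.
rewrite /rmc_Lobj -!maskB frob2_mask mulr_sumr -big_split.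
by apply: eq_bigr => p _; rewrite !mxE.
Qed.

Lemma Lobj_ge0 (c : R) r (U : 'M[R]_(m, r)) (V : 'M[R]_(r, n)) (S : 'M[R]_(m, n)) :
  0 < c -> phi_bounded c S -> 0 <= L c U V S.
Proof.
move=> c0 S_ub; rewrite LobjE; apply: sumr_ge0 => p pO.
have := phigc_ge (S p.1 p.2) (S_ub p pO); rewrite subrr expr0n /= mul0r subr0.
have := lgc_ge0 K_ok (S p.1 p.2) c0.
have : 0 <= 2^-1 * (X - U *m V - S) p.1 p.2 ^+ 2 by rewrite mulr_ge0 ?sqr_ge0.
lra.
Qed.

Lemma Lobj_nondecr (c' c : R) r (U : 'M[R]_(m, r)) (V : 'M[R]_(r, n)) (S : 'M[R]_(m, n)) :
  0 < c' -> c' <= c -> phi_bounded c S -> L c' U V S <= L c U V S.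
Proof.
move=> c'0 c'c S_ub; rewrite !LobjE; apply: ler_sum => p pO.
by rewrite lerD2l; apply: phigc_nondecr => //; exact: S_ub.
Qed.

Lemma Lobj_prox_le (c : R) r (U : 'M[R]_(m, r)) (V : 'M[R]_(r, n)) (S : 'M[R]_(m, n)) :
  0 < c -> phi_bounded c S ->
  L c U V (mask (map_mx (rmc_proxgc K c) (X - U *m V))) <= L c U V S.
Proof.
move=> c0 S_ub; rewrite !LobjE; apply: ler_sum => p pO.
rewrite !mxE -surjective_pairing pO phigc_prox //.
have := phigc_ge ((X - U *m V) p.1 p.2) (S_ub p pO).
by rewrite !mxE; lra.
Qed.

Lemma Lobj_descent_UV (c : R) r (U U' : 'M[R]_(m, r)) (V V' : 'M[R]_(r, n))
    (TU : 'M[R]_(m, r)) (TV : 'M[R]_(r, n)) (S : 'M[R]_(m, n)) :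
  let H := mask X - mask S in
  U' = U - (rmc_minner (rmc_gradU Om H U V) TU / rmc_frob2 (mask (TU *m V))) *: TU ->
  V' = V - (rmc_minner (rmc_gradV Om H U' V) TV / rmc_frob2 (mask (U' *m TV))) *: TV ->
  L c U' V' S <= L c U V S.
Proof.
move=> H /frob2_descent_U descentU /frob2_descent_V descentV.
have LobjH W Z : L c W Z S = 2^-1 * rmc_frob2 (mask H - mask (W *m Z))
    + \sum_(p in Om) rmc_phigc K c (S p.1 p.2).
  by rewrite /rmc_Lobj /H maskB !maskK addrAC.
by rewrite !LobjH lerD2r ler_wpM2l // (le_trans descentV descentU).
Qed.

End Objective.

Theorem theorem1 (R : realType) (K : rmc_gkind R) (m n r : nat)
  (X : 'M[R]_(m, n)) (Om : {set 'I_m * 'I_n}) (xi : R)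
  (U : nat -> 'M[R]_(m, r)) (V : nat -> 'M[R]_(r, n))
  (Sm : nat -> 'M[R]_(m, n)) (c : nat -> R) :
  rmc_gkind_ok K -> 0 < xi ->
  (* step (i): c^k = min{xi d^k, c^{k-1}}, with c^{-1} = +oo *)
  c 0%N = xi * rmc_dscale Om (X - U 0%N *m V 0%N) ->
  (forall k, c k.+1 = Num.min (xi * rmc_dscale Om (X - U k.+1 *m V k.+1)) (c k)) ->
  (* the iteration is well defined: d^k > 0 (so c^k > 0) and the
     matrices to be inverted are invertible *)
  (forall k, 0 < rmc_dscale Om (X - U k *m V k)) ->
  (forall k, V k *m (V k)^T \in unitmx) ->
  (forall k, (U k.+1)^T *m U k.+1 \in unitmx) ->
  (* step (ii) *)
  (forall k, Sm k.+1 =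
     rmc_maskO Om (map_mx (rmc_proxgc K (c k)) (X - U k *m V k))) ->
  (* step (iii) *)
  (forall k,
     let H := rmc_maskO Om X - rmc_maskO Om (Sm k.+1) in
     let gU := rmc_gradU Om H (U k) (V k) in
     let tU := gU *m invmx (V k *m (V k)^T) in
     let muU := rmc_minner gU tU / rmc_frob2 (rmc_maskO Om (tU *m V k)) in
     U k.+1 = U k - muU *: tU) ->
  (forall k,
     let H := rmc_maskO Om X - rmc_maskO Om (Sm k.+1) in
     let gV := rmc_gradV Om H (U k.+1) (V k) in
     let tV := invmx ((U k.+1)^T *m U k.+1) *m gV in
     let muV := rmc_minner gV tV / rmc_frob2 (rmc_maskO Om (U k.+1 *m tV)) in
     V k.+1 = V k - muV *: tV) ->
  exists l : R,
    (fun k : nat => rmc_Lobj K (c k.+1) X Om (U k.+1) (V k.+1) (Sm k.+1))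
      @ \oo --> l.
Proof.
move=> K_ok xi0 c0E cS d_gt0 _ _ Sdef Ustep Vstep.
have c_gt0 k : 0 < c k.
  by elim: k => [|k IH]; rewrite ?c0E ?cS ?lt_min mulr_gt0 ?IH.
have c_nonincr k : c k.+1 <= c k by rewrite cS ge_min lexx orbT.
have S_ub k c' : 0 < c' -> c' <= c k -> phi_bounded K Om c' (Sm k.+1).
  by rewrite Sdef; exact: phi_bounded_prox.
set u := fun k => rmc_Lobj K (c k.+1) X Om (U k.+1) (V k.+1) (Sm k.+1).
have u_nonincr : nonincreasing_seq u.
  apply/nonincreasing_seqP => k; rewrite /u.
  apply: le_trans (Lobj_nondecr K_ok _ _ _ (c_gt0 k.+2) (c_nonincr k.+1)
    (S_ub k.+1 _ (c_gt0 _) (lexx _))) _.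
  apply: le_trans (Lobj_descent_UV _ _ (Ustep k.+1) (Vstep k.+1)) _.
  rewrite (Sdef k.+1); apply: Lobj_prox_le => //.
  exact: S_ub (c_gt0 _) (c_nonincr _).
exists (inf (u @` setT)); apply: nonincreasing_cvgn u_nonincr _.
by exists 0 => _ [k _ <-]; apply: Lobj_ge0 => //; exact: S_ub (c_gt0 _) (c_nonincr _).
Qed.
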